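(* For a free $E$-linear code $C$ of length $2n$, $\mathrm{rank}(SHull(C))=\dim_{\mathbb{F}_2}(SHull(C_{Res}))$.
   Context: $E=\langle \kappa,\tau \mid 2\kappa=2\tau=0,\ \kappa^2=\kappa,\ \tau^2=\tau,\ \kappa\tau=\kappa,\ \tau\kappa=\tau\rangle$ is the non-unital ring $\{0,\kappa,\tau,\zeta\}$, $\zeta=\kappa+\tau$, with $e\kappa=e\tau=e$, $e\zeta=0$ for all $e\in E$. Every $e\in E$ is uniquely $u\kappa+v\zeta$ ($u,v\in\mathbb{F}_2$); $\pi(u\kappa+v\zeta)=u$, componentwise. An $E$-linear code of length $2n$ is a left $E$-submodule $C\subseteq E^{2n}$; $C_{Res}=\pi(C)$, $C_{Tor}=\{v\in\mathbb{F}_2^{2n}:\zeta v\in C\}$ (componentwise, $0\cdot\zeta=0,1\cdot\zeta=\zeta$); $C$ is free if $C_{Res}=C_{Tor}$. A finite set $X\subseteq E^{2n}$ generates $C$ if $C$ equals the union of the $E$-span $\{\sum e_jx_j:e_j\in E\}$ and the $\mathbb{F}_2$-span $\{\sum u_jx_j:u_j\in\mathbb{F}_2\}$ of $X$; the rank of a free code is the cardinality of a minimal generating set. Symplectic inner product (over $E$ or $\mathbb{F}_2$): $\langle (u|v),(u'|v')\rangle_s=\sum_i u_iv'_i+\sum_i v_iu'_i$. For binary $B$: $B^{\perp_S}=\{z:\langle z,w\rangle_s=0\ \forall w\in B\}$, $SHull(B)=B\cap B^{\perp_S}$. For $E$-linear $C$: $C^{\perp_S}=\{z\in E^{2n}:\langle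 z,w\rangle_s=\langle w,z\rangle_s=0\ \forall w\in C\}$, $SHull(C)=C\cap C^{\perp_S}$ (free whenever $C$ is free). *)

From HB Require Import structures.
From mathcomp Require Import all_boot all_order all_algebra.
Set Implicit Arguments. Unset Strict Implicit. Unset Printing Implicit Defensive.
Import Order.TTheory GRing.Theory Num.Theory.
Local Open Scope ring_scope.

(* The non-unital ring E = {0, kappa, tau, zeta}, zeta = kappa + tau. *)
Inductive E := E0 | Ek | Et | Ez.

Definition E_enc (e : E) : bool * bool :=
  match e with E0 => (false, false) | Ek => (true, false)
             | Et => (false, true)  | Ez => (true, true) end.
Definition E_dec (p : bool * bool) : E :=
  match p with (false, false) => E0 | (true, false) => Ek
             | (false, true) => Et | (true, true) => Ez end.
Lemma E_encK : cancel E_enc E_dec. Proof. by case. Qed.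

HB.instance Definition _ := Finite.copy E (can_type E_encK).

Definition Eadd (a b : E) : E :=
  match a, b with
  | E0, x | x, E0 => x
  | Ek, Ek | Et, Et | Ez, Ez => E0
  | Ek, Et | Et, Ek => Ez
  | Ek, Ez | Ez, Ek => Et
  | Et, Ez | Ez, Et => Ek
  end.
Definition Eopp (a : E) : E := a.

Lemma EaddA : associative Eadd. Proof. by do 3!case. Qed.
Lemma EaddC : commutative Eadd. Proof. by do 2!case. Qed.
Lemma Eadd0 : left_id E0 Eadd. Proof. by case. Qed.
Lemma EaddN : left_inverse E0 Eopp Eadd. Proof. by case. Qed.

HB.instance Definition _ := GRing.isZmodule.Build E EaddA EaddC Eadd0 EaddN.

Definition Emul (a b : E) : E :=
  match b with Ek | Et => a | _ => E0 end.

(* pi(u kappa + v zeta) = u, as an element of F_2. *)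
Definition piE (e : E) : 'F_2 :=
  match e with Ek | Et => 1 | _ => 0 end.

(* Vectors of length 2n: indices 'I_(n+n); first n coordinates = u, last n = v. *)
Notation Evec n := {ffun 'I_(n + n) -> E}.
Notation Fvec n := 'rV['F_2]_(n + n).

Definition Escale n (e : E) (x : Evec n) : Evec n := [ffun i => Emul e (x i)].

Definition Elinear n (C : {set Evec n}) : Prop :=
  [/\ (0 : Evec n) \in C,
      (forall x y, x \in C -> y \in C -> x + y \in C) &
      (forall e x, x \in C -> Escale e x \in C)].

Definition Cres n (C : {set Evec n}) : {set Fvec n} :=
  [set (\row_i piE (x i) : Fvec n) | x : Evec n in C].

Definition zeta_vec n (v : Fvec n) : Evec n :=
  [ffun i => if v 0 i == 0 then E0 else Ez].

Definition Ctor n (C : {set Evec n}) : {set Fvec n} :=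
  [set v : Fvec n | zeta_vec v \in C].

Definition Efree n (C : {set Evec n}) : Prop := Cres C = Ctor C.

(* Spans of a finite set X: E-span and F_2-span (u_j in F_2 acting by 0x=0, 1x=x,
   encoded by a boolean selecting the x_j with u_j = 1). *)
Definition inEspan n (X : {set Evec n}) (z : Evec n) : Prop :=
  exists f : Evec n -> E, z = \sum_(x in X) Escale (f x) x.
Definition inF2span n (X : {set Evec n}) (z : Evec n) : Prop :=
  exists f : Evec n -> bool, z = \sum_(x in X | f x) x.

Definition generates n (X C : {set Evec n}) : Prop :=
  forall z, z \in C <-> (inEspan X z \/ inF2span X z).

Definition is_rank n (C : {set Evec n}) (r : nat) : Prop :=
  (exists X, generates X C /\ #|X| = r) /\
  (forall X, generates X C -> (r <= #|X|)%N).

Definition sympE n (x y : Evec n) : E :=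
  \sum_(i < n) Emul (x (lshift n i)) (y (rshift n i)) +
  \sum_(i < n) Emul (x (rshift n i)) (y (lshift n i)).

Definition sympF n (x y : Fvec n) : 'F_2 :=
  \sum_(i < n) x 0 (lshift n i) * y 0 (rshift n i) +
  \sum_(i < n) x 0 (rshift n i) * y 0 (lshift n i).

Definition dualE n (C : {set Evec n}) : {set Evec n} :=
  [set z | [forall w in C, (sympE z w == 0) && (sympE w z == 0)]].
Definition SHullE n (C : {set Evec n}) : {set Evec n} := C :&: dualE C.

Definition dualF n (B : {set Fvec n}) : {set Fvec n} :=
  [set z | [forall w in B, sympF z w == 0]].
Definition SHullF n (B : {set Fvec n}) : {set Fvec n} := B :&: dualF B.

Definition dimF2 n (B : {set Fvec n}) : nat := \dim <<enum B>>%VS.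

(* Writing e = u kappa + v zeta identifies E with F_2 x F_2, and a free code C
   with kappa B + zeta B, where B = C_Res = C_Tor.  The product e x only sees
   the residue u of x, so the symplectic conditions defining SHull(C) split
   coordinatewise and SHull(C) = kappa H + zeta H with H = SHull(B).  A basis
   of H, lifted by kappa, generates kappa H + zeta H over E; conversely the
   residues of any generating set span H, so dim H is the least size of a
   generating set. *)

From Pilot Require Import Defs.
From mathcomp Require Import all_boot all_order all_algebra.
Set Implicit Arguments. Unset Strict Implicit. Unset Printing Implicit Defensive.
Import Order.TTheory GRing.Theory Num.Theory.
Local Open Scope ring_scope.

(* Unqualified, [piE] would resolve to MathComp's generic_quotient.piE. *)
Local Notation piE := Defs.piE.

Lemma F2_cases (c : 'F_2) : c = 0 \/ c = 1.
Proof. case: c => [[|[|m]] Hm]; [left | right | by []]; exact/val_inj. Qed.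

Lemma F2_addxx (c : 'F_2) : c + c = 0.
Proof. exact: addrr_pchar2 (pchar_Fp _) c. Qed.

(* The coordinate v of e = u kappa + v zeta; piE e is u. *)
Definition torE (e : E) : 'F_2 := match e with Et | Ez => 1 | _ => 0 end.

Definition Emk (u v : 'F_2) : E :=
  if u == 0 then (if v == 0 then E0 else Ez) else (if v == 0 then Ek else Et).

Lemma piE_Emk u v : piE (Emk u v) = u.
Proof. by case: (F2_cases u) => ->; case: (F2_cases v) => ->. Qed.

Lemma torE_Emk u v : torE (Emk u v) = v.
Proof. by case: (F2_cases u) => ->; case: (F2_cases v) => ->. Qed.

Lemma piE_torE_inj e1 e2 : piE e1 = piE e2 -> torE e1 = torE e2 -> e1 = e2.
Proof. by case: e1; case: e2 => //= /eqP; rewrite ?oner_eq0 // eq_sym oner_eq0. Qed.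

Lemma E_eq0 e : (e == 0) = (piE e == 0) && (torE e == 0).
Proof. by case: e; rewrite /= ?oner_eq0 ?eqxx. Qed.

Lemma piED a b : piE (a + b) = piE a + piE b.
Proof. by case: a; case: b; rewrite /= ?F2_addxx ?addr0 ?add0r. Qed.

Lemma torED a b : torE (a + b) = torE a + torE b.
Proof. by case: a; case: b; rewrite /= ?F2_addxx ?addr0 ?add0r. Qed.

Lemma piEM a b : piE (Emul a b) = piE a * piE b.
Proof. by case: a; case: b; rewrite /= ?mulr0 ?mul0r ?mulr1. Qed.

Lemma torEM a b : torE (Emul a b) = torE a * piE b.
Proof. by case: a; case: b; rewrite /= ?mulr0 ?mul0r ?mulr1. Qed.

Lemma piE_sum I (r : seq I) (P : pred I) (F : I -> E) :
  piE (\sum_(i <- r | P i) F i) = \sum_(i <- r | P i) piE (F i).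
Proof. exact: (big_morph piE piED). Qed.

Lemma torE_sum I (r : seq I) (P : pred I) (F : I -> E) :
  torE (\sum_(i <- r | P i) F i) = \sum_(i <- r | P i) torE (F i).
Proof. exact: (big_morph torE torED). Qed.

Section Vectors.
Variable n : nat.
Implicit Types (x y z : Evec n) (a b w : Fvec n).

Definition resv x : Fvec n := \row_i piE (x i).
Definition torv x : Fvec n := \row_i torE (x i).
Definition Evec_of a b : Evec n := [ffun i => Emk (a 0 i) (b 0 i)].

Lemma resv_of a b : resv (Evec_of a b) = a.
Proof. by apply/rowP => i; rewrite !mxE ffunE piE_Emk. Qed.

Lemma torv_of a b : torv (Evec_of a b) = b.
Proof. by apply/rowP => i; rewrite !mxE ffunE torE_Emk. Qed.

Lemma resv_torv_inj x y : resv x = resv y -> torv x = torv y -> x = y.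
Proof.
move=> /rowP hres /rowP htor; apply/ffunP => i.
by apply: piE_torE_inj; [move: (hres i) | move: (htor i)]; rewrite !mxE.
Qed.

Lemma resvD x y : resv (x + y) = resv x + resv y.
Proof. by apply/rowP => i; rewrite !mxE ffunE piED. Qed.

Lemma torvD x y : torv (x + y) = torv x + torv y.
Proof. by apply/rowP => i; rewrite !mxE ffunE torED. Qed.

Lemma resv0 : resv 0 = 0.
Proof. by apply/rowP => i; rewrite !mxE ffunE. Qed.

Lemma torv0 : torv 0 = 0.
Proof. by apply/rowP => i; rewrite !mxE ffunE. Qed.

Lemma resv_sum I (r : seq I) (P : pred I) (F : I -> Evec n) :
  resv (\sum_(i <- r | P i) F i) = \sum_(i <- r | P i) resv (F i).
Proof. exact: (big_morph resv resvD resv0). Qed.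

Lemma torv_sum I (r : seq I) (P : pred I) (F : I -> Evec n) :
  torv (\sum_(i <- r | P i) F i) = \sum_(i <- r | P i) torv (F i).
Proof. exact: (big_morph torv torvD torv0). Qed.

Lemma resv_Escale e x : resv (Escale e x) = piE e *: resv x.
Proof. by apply/rowP => i; rewrite !mxE ffunE piEM. Qed.

Lemma torv_Escale e x : torv (Escale e x) = torE e *: resv x.
Proof. by apply/rowP => i; rewrite !mxE ffunE torEM. Qed.

Lemma resv_zeta a : resv (zeta_vec a) = 0.
Proof. by apply/rowP => i; rewrite !mxE ffunE; case: ifP. Qed.

Lemma torv_zeta a : torv (zeta_vec a) = a.
Proof. by apply/rowP => i; rewrite !mxE ffunE; case: (F2_cases (a 0 i)) => ->. Qed.

Lemma Fvec_addxx a : a + a = 0.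
Proof. by apply/rowP => i; rewrite !mxE F2_addxx. Qed.

Lemma EscaleDl e1 e2 x : Escale (e1 + e2) x = Escale e1 x + Escale e2 x.
Proof.
by apply: resv_torv_inj;
  rewrite ?resvD ?torvD ?resv_Escale ?torv_Escale ?piED ?torED scalerDl.
Qed.

Lemma Escale0 x : Escale 0 x = 0.
Proof.
by apply: resv_torv_inj; rewrite ?resv0 ?torv0 ?resv_Escale ?torv_Escale scale0r.
Qed.

Lemma piE_sympE x y : piE (sympE x y) = sympF (resv x) (resv y).
Proof.
rewrite /sympE /sympF piED !piE_sum.
by congr (_ + _); apply: eq_bigr => i _; rewrite piEM !mxE.
Qed.

Lemma torE_sympE x y : torE (sympE x y) = sympF (torv x) (resv y).
Proof.
rewrite /sympE /sympF torED !torE_sum.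
by congr (_ + _); apply: eq_bigr => i _; rewrite torEM !mxE.
Qed.

Lemma sympE_eq0 x y :
  (sympE x y == 0) = (sympF (resv x) (resv y) == 0) && (sympF (torv x) (resv y) == 0).
Proof. by rewrite E_eq0 piE_sympE torE_sympE. Qed.

Lemma sympFC a b : sympF a b = sympF b a.
Proof. by rewrite /sympF addrC; congr (_ + _); apply: eq_bigr => i _; rewrite mulrC. Qed.

Lemma sympFDl a b w : sympF (a + b) w = sympF a w + sympF b w.
Proof.
rewrite /sympF [RHS]addrACA.
by congr (_ + _); rewrite -big_split; apply: eq_bigr => i _; rewrite !mxE mulrDl.
Qed.

Lemma sympF0l w : sympF 0 w = 0.
Proof. by rewrite /sympF !big1 ?addr0 // => i _; rewrite !mxE mul0r. Qed.

End Vectors.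

Definition Ecode_of n (U : {vspace Fvec n}) : {set Evec n} :=
  [set z | (resv z \in U) && (torv z \in U)].

Section Spans.
Variables (n : nat) (X : {set Evec n}).
Implicit Type W : {vspace Fvec n}.

Lemma inEspan0 : inEspan X 0.
Proof. by exists (fun=> 0); rewrite big1 // => x _; rewrite Escale0. Qed.

Lemma inEspanD y z : inEspan X y -> inEspan X z -> inEspan X (y + z).
Proof.
move=> [f ->] [g ->]; exists (fun x => f x + g x); rewrite -big_split /=.
by apply: eq_bigr => x _; rewrite EscaleDl.
Qed.

Lemma inEspan_Escale e x : x \in X -> inEspan X (Escale e x).
Proof.
move=> xX; exists (fun y => if y == x then e else 0).
rewrite (bigD1 x) //= eqxx big1 ?addr0 // => y /andP[_ /negbTE ->].
by rewrite Escale0.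
Qed.

Lemma inEspan_Ecode W z :
  {in X, forall x, resv x \in W} -> inEspan X z -> z \in Ecode_of W.
Proof.
move=> resX [f ->]; rewrite inE resv_sum torv_sum.
by apply/andP; split; apply: memv_suml => x xX;
  rewrite ?resv_Escale ?torv_Escale memvZ ?resX.
Qed.

Lemma resv_inF2span W z :
  {in X, forall x, resv x \in W} -> inF2span X z -> resv z \in W.
Proof. by move=> resX [f ->]; rewrite resv_sum; apply: memv_suml => x /andP[/resX]. Qed.

Lemma torv_inF2span W z :
  {in X, forall x, torv x \in W} -> inF2span X z -> torv z \in W.
Proof. by move=> torX [f ->]; rewrite torv_sum; apply: memv_suml => x /andP[/torX]. Qed.

End Spans.

Section EcodeRank.
Variables (n : nat) (U : {vspace Fvec n}).

Definition lift_vbasis : {set Evec n} := [set Evec_of h 0 | h in (vbasis U : seq _)].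

Lemma card_lift_vbasis : #|lift_vbasis| = \dim U.
Proof.
rewrite card_imset; last by move=> a b /(congr1 (@resv n)); rewrite !resv_of.
have /card_uniqP -> := free_uniq (basis_free (vbasisP U)).
by rewrite size_tuple.
Qed.

Lemma inEspan_lift_vbasis z : z \in Ecode_of U -> inEspan lift_vbasis z.
Proof.
rewrite inE => /andP[resU torU].
pose c i := Emk (coord (vbasis U) i (resv z)) (coord (vbasis U) i (torv z)).
have -> : z = \sum_(i < \dim U) Escale (c i) (Evec_of (vbasis U)`_i 0).
  apply: resv_torv_inj; rewrite ?resv_sum ?torv_sum.
    under eq_bigr => i _ do rewrite resv_Escale piE_Emk resv_of.
    exact: coord_vbasis.
  under eq_bigr => i _ do rewrite torv_Escale torE_Emk resv_of.
  exact: coord_vbasis.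
apply: (big_ind (inEspan lift_vbasis)); [exact: inEspan0 | exact: inEspanD |].
move=> i _; apply/inEspan_Escale/imsetP; exists (vbasis U)`_i => //.
by rewrite mem_nth ?size_tuple.
Qed.

Lemma generates_lift_vbasis : generates lift_vbasis (Ecode_of U).
Proof.
have resX : {in lift_vbasis, forall x, resv x \in U}.
  by move=> _ /imsetP[h /vbasis_mem hU ->]; rewrite resv_of.
have torX : {in lift_vbasis, forall x, torv x \in U}.
  by move=> _ /imsetP[h _ ->]; rewrite torv_of mem0v.
move=> z; split=> [/inEspan_lift_vbasis | [/(inEspan_Ecode resX) // | zF2]]; first by left.
by rewrite inE (resv_inF2span resX zF2) (torv_inF2span torX zF2).
Qed.

Lemma dimv_le_generates X : generates X (Ecode_of U) -> (\dim U <= #|X|)%N.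
Proof.
move=> genX; set V := <<[seq resv x | x <- enum X]>>%VS.
have resX : {in X, forall x, resv x \in V}.
  by move=> x xX; rewrite memv_span // map_f // mem_enum.
have UV : (U <= V)%VS.
  apply/subvP => h hU; rewrite -(resv_of h 0).
  have /genX[/(inEspan_Ecode resX) | /(resv_inF2span resX) //] :
      Evec_of h 0 \in Ecode_of U by rewrite inE resv_of torv_of hU mem0v.
  by rewrite inE => /andP[].
by rewrite (leq_trans (dimvS UV)) // (leq_trans (dim_span _)) // size_map cardE.
Qed.

Lemma is_rank_Ecode_of : is_rank (Ecode_of U) (\dim U).
Proof.
split; last exact: dimv_le_generates.
by exists lift_vbasis; rewrite card_lift_vbasis; split=> //; exact: generates_lift_vbasis.
Qed.

End EcodeRank.

Lemma mem_span_enum_addr_closed m (S : {set 'rV['F_2]_m}) :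
  0 \in S -> {in S &, forall a b, a + b \in S} ->
  forall a, (a \in <<enum S>>%VS) = (a \in S).
Proof.
move=> S0 SD a; apply/idP/idP => [a_span | aS]; last by rewrite memv_span ?mem_enum.
rewrite (coord_span (X := in_tuple (enum S)) a_span).
apply: (big_ind (fun v => v \in S) S0 SD) => i _.
have : (in_tuple (enum S))`_i \in enum S by exact: mem_nth (ltn_ord i).
by rewrite mem_enum; case: (F2_cases (coord (in_tuple (enum S)) i a)) => ->; rewrite ?scale0r ?scale1r.
Qed.

Section SymplecticHull.
Variables (n : nat) (B : {set Fvec n}).
Hypotheses (B0 : 0 \in B) (BD : {in B &, forall a b, a + b \in B}).

Lemma SHullF0 : 0 \in SHullF B.
Proof. by rewrite !inE B0; apply/forall_inP => w _; rewrite sympF0l. Qed.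

Lemma SHullFD : {in SHullF B &, forall a b, a + b \in SHullF B}.
Proof.
move=> a b; rewrite !inE => /andP[aB /forall_inP aB'] /andP[bB /forall_inP bB'].
rewrite BD //; apply/forall_inP => w wB.
by rewrite sympFDl (eqP (aB' _ wB)) (eqP (bB' _ wB)) addr0.
Qed.

Lemma mem_span_SHullF a : (a \in <<enum (SHullF B)>>%VS) = (a \in SHullF B).
Proof. exact: mem_span_enum_addr_closed SHullF0 SHullFD a. Qed.

End SymplecticHull.

Section FreeCode.
Variables (n : nat) (C : {set Evec n}).
Hypotheses (linC : Elinear C) (freeC : Efree C).
Local Notation B := (Cres C).

Lemma resv_Cres x : x \in C -> resv x \in B.
Proof. by move=> xC; apply/imsetP; exists x. Qed.

Lemma Cres0 : 0 \in B.
Proof. by case: linC => C0 _ _; rewrite -(resv0 n) resv_Cres. Qed.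

Lemma CresD : {in B &, forall a b, a + b \in B}.
Proof.
case: linC => _ CD _ _ _ /imsetP[x xC ->] /imsetP[y yC ->].
by rewrite -[_ + _]resvD resv_Cres ?CD.
Qed.

(* z = kappa z' + zeta (torv z), where z' is any codeword with residue resv z;
   conversely zeta (torv z) = z + kappa z. *)
Lemma mem_free_code z : (z \in C) = (resv z \in B) && (torv z \in B).
Proof.
case: linC => _ CD CS; apply/idP/andP => [zC | [/imsetP[x xC resz] torzB]].
  rewrite resv_Cres //; split=> //; rewrite freeC inE.
  have -> : zeta_vec (torv z) = z + Escale Ek z.
    apply: resv_torv_inj;
      by rewrite ?resvD ?torvD ?resv_Escale ?torv_Escale ?resv_zeta ?torv_zeta
                 /= ?scale1r ?scale0r ?Fvec_addxx ?addr0.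
  by rewrite CD ?CS.
move: torzB; rewrite freeC inE => torzC.
have -> : z = Escale Ek x + zeta_vec (torv z).
  apply: resv_torv_inj;
    by rewrite ?resvD ?torvD ?resv_Escale ?torv_Escale ?resv_zeta ?torv_zeta
               /= ?scale1r ?scale0r ?addr0 ?add0r -?resz.
by rewrite CD ?CS.
Qed.

Lemma Evec_of_Cres a : a \in B -> Evec_of a 0 \in C.
Proof. by move=> aB; rewrite mem_free_code resv_of torv_of aB Cres0. Qed.

Lemma mem_dualE_free z :
  (z \in dualE C) = (resv z \in dualF B) && (torv z \in dualF B).
Proof.
rewrite !inE; apply/forall_inP/andP => [zC' | [/forall_inP resz /forall_inP torz]].
  by split; apply/forall_inP => w wB; move: (zC' _ (Evec_of_Cres wB));
    rewrite sympE_eq0 resv_of => /andP[/andP[]].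
move=> w; rewrite mem_free_code => /andP[reswB torwB].
by rewrite !sympE_eq0 resz // torz // sympFC resz // sympFC resz.
Qed.

Lemma mem_SHullE_free z :
  (z \in SHullE C) = (resv z \in SHullF B) && (torv z \in SHullF B).
Proof. by rewrite !in_setI mem_free_code mem_dualE_free andbACA. Qed.

Lemma SHullE_free : SHullE C = Ecode_of <<enum (SHullF B)>>.
Proof.
apply/setP => z.
by rewrite mem_SHullE_free [RHS]inE !(mem_span_SHullF Cres0 CresD).
Qed.

End FreeCode.

Theorem mainTheorem17 (n : nat) (C : {set Evec n}) :
  Elinear C -> Efree C -> is_rank (SHullE C) (dimF2 (SHullF (Cres C))).
Proof.
by move=> linC freeC; rewrite /dimF2 (SHullE_free linC freeC); exact: is_rank_Ecode_of.
Qed.
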